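(* Let $u$ and $v$ be two prime words such that $u<_{lex}v$. Then $u^\alpha v$ is a prime word for every ordinal $\alpha$.
   Context: $A$ is a finite alphabet with a linear order $<_A$. Words are sequences of letters indexed by countable ordinals; $x^\alpha$ is the concatenation of $\alpha$ copies of $x$. A prefix of $x$ is $x[0,\gamma)$, a suffix is $x[\gamma,|x|)$ ($0\le\gamma\le|x|$), proper if $0<\gamma<|x|$. Write $x<_{str}x'$ if there are letters $a<_Ab$ and words $y,z,z'$ with $x=yaz$, $x'=ybz'$; $x\le_{lex}x'$ iff $x$ is a prefix of $x'$ or $x<_{str}x'$; $<_{lex}$ is its strict version. A word $x$ is primitive if $x=y^\alpha$ implies $\alpha=1$ and $y=x$. A word $w$ is prime if it is primitive and every proper suffix $z$ of $w$ satisfies $w\le_{lex}z$. *)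

From mathcomp Require Import all_boot all_order.
Set Implicit Arguments. Unset Strict Implicit. Unset Printing Implicit Defensive.
Import Order.TTheory.

(* A (raw) transfinite word over A: a type of positions with an order
   relation and a labelling.  Genuine words are those satisfying [is_word]:
   the order is a strict well-order and the position set is countable, i.e.
   positions are indexed by a countable ordinal.  Words are identified up to
   label-preserving order isomorphism ([weq]). *)
Record rword (A : Type) := RWord {
  pos : Type;
  plt : pos -> pos -> Prop;
  lbl : pos -> A }.

Definition is_word (A : Type) (x : rword A) : Prop :=
  (forall p : pos x, ~ plt p p) /\
  (forall p q r : pos x, plt p q -> plt q r -> plt p r) /\
  (forall p q : pos x, plt p q \/ p = q \/ plt q p) /\
  well_founded (@plt A x) /\
  (exists f : pos x -> nat, forall p q, f p = f q -> p = q).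

(* Countable ordinals = genuine words over the one-letter alphabet unit. *)
Definition cordinal := rword unit.

Definition weq (A : Type) (x y : rword A) : Prop :=
  exists (f : pos x -> pos y) (g : pos y -> pos x),
    (forall p, g (f p) = p) /\ (forall q, f (g q) = q) /\
    (forall p q, plt p q <-> plt (f p) (f q)) /\
    (forall p, lbl (f p) = lbl p).

Definition concat (A : Type) (x y : rword A) : rword A :=
  @RWord A (pos x + pos y)%type
    (fun s t => match s, t with
                | inl p, inl q => plt p q
                | inl _, inr _ => True
                | inr _, inl _ => False
                | inr p, inr q => plt p q
                end)
    (fun s => match s with inl p => lbl p | inr q => lbl q end).

Definition letter (A : Type) (a : A) : rword A :=
  @RWord A unit (fun _ _ => False) (fun _ => a).

Definition ord_one : cordinal := letter tt.

Definition nonempty (A : Type) (x : rword A) : Prop := inhabited (pos x).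

(* x^alpha : concatenation of alpha copies of x (lexicographic order on
   alpha x |x|, copy index first). *)
Definition wpow (A : Type) (x : rword A) (alpha : cordinal) : rword A :=
  @RWord A (pos alpha * pos x)%type
    (fun s t => plt s.1 t.1 \/ (s.1 = t.1 /\ plt s.2 t.2))
    (fun s => lbl s.2).

Definition wprefix (A : Type) (x x' : rword A) : Prop :=
  exists z, is_word z /\ weq x' (concat x z).

(* z is a proper suffix of w : w = y z with y, z nonempty
   (i.e. z = w[gamma,|w|) with 0 < gamma < |w|). *)
Definition proper_suffix (A : Type) (z w : rword A) : Prop :=
  exists y, is_word y /\ nonempty y /\ nonempty z /\ weq w (concat y z).

Section Lex.
Context {d : Order.disp_t} {A : orderType d}.

Definition str_lt (x x' : rword A) : Prop :=
  exists (y z z' : rword A) (a b : A),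
    is_word y /\ is_word z /\ is_word z' /\ (a < b)%O /\
    weq x (concat y (concat (letter a) z)) /\
    weq x' (concat y (concat (letter b) z')).

Definition lex_le (x x' : rword A) : Prop := wprefix x x' \/ str_lt x x'.
Definition lex_lt (x x' : rword A) : Prop := lex_le x x' /\ ~ weq x x'.

Definition primitive (x : rword A) : Prop :=
  forall (y : rword A) (alpha : cordinal), is_word y -> is_word alpha ->
    weq x (wpow y alpha) -> weq alpha ord_one /\ weq y x.

Definition prime_word (w : rword A) : Prop :=
  primitive w /\ forall z, is_word z -> proper_suffix z w -> lex_le w z.
End Lex.

(* Write w = u^alpha v.  The main step is that u^J v <= v for every countable
   ordinal J, by transfinite induction on J.  Primality of v and u < v give
   u v <= v, hence u^(J+1) v <= u^J v.  For the limit step, v cannot be a proper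
   prefix of u^J v, and if v <_str u^J v then the first letter where they differ
   lies in some copy of u, indexed by e in J, which yields v <_str u^(e+1) v <= v.
   A suffix of w is either a suffix of v, hence >= v >= w, or s u^beta v with s
   a suffix of u and beta a final segment of alpha.  As u is prime, either s = u,
   and then, beta being isomorphic to a prefix of alpha, w = u^beta u^rho v is
   <= u^beta v; or u <_str s, and then w <_str s u^beta v.
   If w = y^beta, the first letter of v falls into the copy of y indexed by some
   b in beta.  The part of y^beta after that copy (or the copy itself, if it is
   the last one) is both a prefix and a suffix of w, hence equal to w.  This
   forces v = w = y^beta, so that beta = 1 by primitivity of v, or y = w, so
   that again beta = 1. *)

From mathcomp Require Import all_boot all_order.
From Stdlib Require Import Classical ClassicalEpsilon FunctionalExtensionality.
From Stdlib Require Import ProofIrrelevance Cantor Setoid.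

Set Implicit Arguments. Unset Strict Implicit. Unset Printing Implicit Defensive.
Import Order.TTheory.

(** * Words up to isomorphism *)

Section Words.
Variable L : Type.
Implicit Types x y z : rword L.

Lemma weq_refl x : weq x x.
Proof. by exists id, id. Qed.

Lemma weq_sym x y : weq x y -> weq y x.
Proof.
case=> f [g [gf [fg [mono lblf]]]]; exists g, f; do !split=> //.
- by rewrite (mono (g p)) !fg.
- by rewrite (mono (g p)) !fg.
- by move=> q; rewrite -{2}(fg q) lblf.
Qed.

Lemma weq_trans x y z : weq x y -> weq y z -> weq x z.
Proof.
case=> f [g [gf [fg [mono lblf]]]] [f' [g' [gf' [fg' [mono' lblf']]]]].
exists (f' \o f), (g \o g'); do !split=> /=.
- by move=> p; rewrite gf' gf.
- by move=> q; rewrite fg fg'.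
- by rewrite -mono' -mono.
- by rewrite -mono' -mono.
- by move=> p; rewrite lblf' lblf.
Qed.

Lemma plt_irr x : is_word x -> forall p : pos x, ~ plt p p.
Proof. by case. Qed.

Lemma plt_trans x : is_word x -> forall p q r : pos x, plt p q -> plt q r -> plt p r.
Proof. by case=> _ []. Qed.

Lemma plt_total x : is_word x -> forall p q : pos x, plt p q \/ p = q \/ plt q p.
Proof. by case=> _ [_ []]. Qed.

Lemma plt_wf x : is_word x -> well_founded (@plt L x).
Proof. by case=> _ [_ [_ []]]. Qed.

Lemma plt_ind x : is_word x -> forall P : pos x -> Prop,
  (forall p, (forall q, plt q p -> P q) -> P p) -> forall p, P p.
Proof. by move=> /plt_wf wf P; apply: well_founded_ind. Qed.

Lemma plt_min x (P : pos x -> Prop) : is_word x -> (exists p, P p) ->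
  exists2 m, P m & forall q, P q -> ~ plt q m.
Proof.
move=> wx [p]; elim/(plt_ind wx): p => p IH Pp.
case: (classic (exists2 q, P q & plt q p)) => [[q Pq qp] | nobelow].
  exact: (IH q qp Pq).
by exists p => // q Pq qp; apply: nobelow; exists q.
Qed.

Lemma weq_of_mono x y (f : pos x -> pos y) : is_word x -> is_word y ->
  (forall p q, plt p q -> plt (f p) (f q)) -> (forall q, exists p, f p = q) ->
  (forall p, lbl (f p) = lbl p) -> weq x y.
Proof.
move=> wx wy mono onto lblf; have [g fg] := choice _ onto.
have reflect_lt p q : plt (f p) (f q) -> plt p q.
  move=> fpq; case: (plt_total wx p q) => [// | [E | /mono qp]].
    by move: fpq; rewrite E => /(plt_irr wy).
  by case: (plt_irr wy (plt_trans wy fpq qp)).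
have inj p q : f p = f q -> p = q.
  move=> E; case: (plt_total wx p q) => [/mono | [// | /mono]]; rewrite E => /(plt_irr wy) //.
exists f, g; do !split => //.
- by move=> p; apply: inj; rewrite fg.
- exact: mono.
- exact: reflect_lt.
Qed.

End Words.

Arguments plt_irr {L x} wx p.
Arguments plt_trans {L x} wx {p q r}.

Add Parametric Relation (L : Type) : (rword L) (@weq L)
  reflexivity proved by (@weq_refl L)
  symmetry proved by (@weq_sym L)
  transitivity proved by (@weq_trans L) as weq_rel.

#[global] Hint Resolve weq_refl : core.

Definition wempty (L : Type) : rword L :=
  @RWord L Empty_set (fun _ _ => False) (fun e => match e with end).
Arguments wempty {L}.

Section Concat.
Variable L : Type.
Implicit Types x y z : rword L.

Lemma is_word_wempty : is_word (@wempty L).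
Proof.
split; [by [] | split; [by [] | split; [by [] | split]]]; first by case.
by exists (fun _ => 0) => [[]].
Qed.

Lemma is_word_letter (a : L) : is_word (letter a).
Proof.
split; [by move=> p [] | split; [by move=> p q r [] | split]].
  by move=> [] []; right; left.
split.
  by move=> p; constructor.
by exists (fun _ => 0) => [[] []].
Qed.

Lemma is_word_concat x y : is_word x -> is_word y -> is_word (concat x y).
Proof.
move=> wx wy; split; [|split; [|split; [|split]]].
- by case=> p /=; apply: plt_irr.
- by move=> [p|p] [q|q] [r|r] //=; apply: plt_trans.
- move=> [p|p] [q|q] /=; auto.
    by case: (plt_total wx p q) => [|[->|]]; auto.
  by case: (plt_total wy p q) => [|[->|]]; auto.
- have acc_l p : Acc (@plt L (concat x y)) (inl p).
    by elim/(plt_ind wx): p => p IH; constructor=> -[p' /IH | q []].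
  case=> [p | q]; first exact: acc_l.
  by elim/(plt_ind wy): q => q IH; constructor=> -[p _ | q' /IH].
- case: wx => _ [_ [_ [_ [f inj_f]]]]; case: wy => _ [_ [_ [_ [g inj_g]]]].
  exists (fun s => match s with inl p => Cantor.to_nat (0, f p)
                               | inr q => Cantor.to_nat (1, g q) end).
  by move=> [p|p] [q|q] /Cantor.to_nat_inj [] // => [/inj_f | /inj_g] ->.
Qed.

Lemma concat_weq x x' y y' : weq x x' -> weq y y' -> weq (concat x y) (concat x' y').
Proof.
case=> f [g [gf [fg [mono lblf]]]] [f' [g' [gf' [fg' [mono' lblf']]]]].
exists (fun s => match s with inl a => inl (f a) | inr b => inr (f' b) end).
exists (fun s => match s with inl a => inl (g a) | inr b => inr (g' b) end).
do !split.
- by case=> a; rewrite ?gf ?gf'.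
- by case=> a; rewrite ?fg ?fg'.
- by case: p q => a [b|b] //=; rewrite ?mono ?mono'.
- by case: p q => a [b|b] //=; rewrite ?mono ?mono'.
- by case.
Qed.

End Concat.

Add Parametric Morphism (L : Type) : (@concat L)
  with signature @weq L ==> @weq L ==> @weq L as concat_morph.
Proof. by move=> x x' E y y' F; apply: concat_weq. Qed.

Add Parametric Morphism (L : Type) : (@nonempty L)
  with signature @weq L ==> iff as nonempty_morph.
Proof.
by move=> x y E; split=> -[p]; [case: E => f _ | case: (weq_sym E) => f _]; exists; apply: f.
Qed.

Create HintDb word discriminated.
#[global] Hint Resolve is_word_wempty is_word_letter is_word_concat : word.
(* [nocore] keeps this hint from calling itself; an [is_word] goal left to [done]
   would make it loop on the [Acc] component. *)
#[global] Hint Extern 0 (is_word _) => solve [auto with nocore word] : core.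

Section ConcatLaws.
Variable L : Type.
Implicit Types x y z : rword L.

Lemma concat_assoc x y z : weq (concat (concat x y) z) (concat x (concat y z)).
Proof.
exists (fun s => match s with inl (inl a) => inl a | inl (inr b) => inr (inl b)
                            | inr c => inr (inr c) end).
exists (fun s => match s with inl a => inl (inl a) | inr (inl b) => inl (inr b)
                            | inr (inr c) => inr c end).
split; [by move=> [[a|b]|c] | split; [by move=> [a|[b|c]] | split]]; last by move=> [[a|b]|c].
by move=> [[a|b]|c] [[a'|b']|c'].
Qed.

Lemma concat_empty_r x e : ~ nonempty e -> weq (concat x e) x.
Proof.
move=> e0; have nob (b : pos e) : False by apply: e0; exists.
exists (fun s => match s with inl a => a | inr b => match nob b with end end), inl.
split; [by move=> [a|b] // | split; [by [] | split]]; last by move=> [a|b] //; case: (nob b).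
by move=> [a|b] [a'|b'] //; case: (nob b).
Qed.

Lemma concat_empty_l x e : ~ nonempty e -> weq (concat e x) x.
Proof.
move=> e0; have nob (b : pos e) : False by apply: e0; exists.
exists (fun s => match s with inr a => a | inl b => match nob b with end end), inr.
split; [by move=> [b|a] // | split; [by [] | split]]; last by move=> [b|a] //; case: (nob b).
by move=> [b|a] [b'|a'] //; case: (nob b).
Qed.

Lemma nonempty_wempty : ~ nonempty (@wempty L).
Proof. by case. Qed.

Lemma nonempty_concat x y : nonempty (concat x y) <-> nonempty x \/ nonempty y.
Proof.
rewrite /nonempty; split=> [[[a|b]] | [[a]|[b]]].
- by left; exists.
- by right; exists.
- by exists; left.
- by exists; right.
Qed.

Lemma nonempty_letter (a : L) : nonempty (letter a).
Proof. by exists; exact: tt. Qed.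

Lemma weq_wempty x : ~ nonempty x -> weq x wempty.
Proof. by move=> nx; rewrite -(concat_empty_r x nonempty_wempty) concat_empty_l. Qed.

Lemma mono_inflationary x (f : pos x -> pos x) : is_word x ->
  (forall a b, plt a b -> plt (f a) (f b)) -> forall a, ~ plt (f a) a.
Proof. by move=> wx mono; elim/(plt_ind wx) => a IH /[dup] /mono /IH. Qed.

Lemma mono_concat_empty x (s : rword L) (f : pos (concat x s) -> pos x) : is_word x ->
  (forall a b, plt a b -> plt (f a) (f b)) -> ~ nonempty s.
Proof.
move=> wx mono [b].
have infl := mono_inflationary (f := fun a => f (inl a)) wx (fun a a' => mono (inl a) (inl a')).
exact: (infl (f (inr b)) (mono (inl _) (inr b) I)).
Qed.

Lemma absorb_empty x (s : rword L) : is_word x -> weq x (concat x s) -> ~ nonempty s.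
Proof.
move=> wx /weq_sym [f [_ [_ [_ [mono _]]]]].
by apply: (mono_concat_empty (f := f) wx) => a b /mono.
Qed.

End ConcatLaws.

Arguments nonempty_wempty {L}.
#[global] Hint Resolve nonempty_wempty : core.

(** * Subwords and factorizations *)

Definition sub (L : Type) (x : rword L) (P : pos x -> Prop) : rword L :=
  @RWord L {p : pos x | P p} (fun s t => plt (sval s) (sval t)) (fun s => lbl (sval s)).
Arguments sub {L} x P.

Lemma sub_inj (L : Type) (x : rword L) (P : pos x -> Prop) (s t : pos (sub x P)) :
  sval s = sval t -> s = t.
Proof. by case: s t => a h [b h'] /= E; subst; congr exist; apply: proof_irrelevance. Qed.

Definition down_closed (L : Type) (x : rword L) (P : pos x -> Prop) :=
  forall a b, plt a b -> P b -> P a.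

Lemma is_word_sub (L : Type) (x : rword L) P : is_word x -> is_word (sub x P).
Proof.
move=> wx; split; [|split; [|split; [|split]]].
- by move=> [p hp] /=; apply: plt_irr wx p.
- by move=> [p hp] [q hq] [r hr] /=; apply: (plt_trans wx).
- move=> [p hp] [q hq] /=; case: (plt_total wx p q) => [|[E|]]; auto.
  by right; left; apply: sub_inj.
- move=> [p hp]; elim/(plt_ind wx): p hp => p IH hp.
  by constructor=> -[q hq] /= /IH.
- case: wx => _ [_ [_ [_ [f inj_f]]]]; exists (fun s => f (sval s)).
  by move=> s t /inj_f /sub_inj.
Qed.

#[global] Hint Resolve is_word_sub : word.

Section Subwords.
Variable L : Type.
Implicit Types x y p m q n : rword L.

Lemma sub_True x : is_word x -> weq (sub x (fun _ => True)) x.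
Proof.
move=> wx; apply: (@weq_of_mono _ (sub x _) x sval) => // q.
by exists (exist _ q I).
Qed.

Lemma sub_ext x (P Q : pos x -> Prop) : is_word x ->
  (forall a, P a <-> Q a) -> weq (sub x P) (sub x Q).
Proof.
move=> wx PQ; apply: (@weq_of_mono _ (sub x P) (sub x Q)
  (fun s => exist Q (sval s) (proj1 (PQ _) (svalP s)))) => //.
by move=> [q hq]; exists (exist _ q (proj2 (PQ q) hq)); apply: sub_inj.
Qed.

Lemma sub_concat x (R P Q : pos x -> Prop) : is_word x ->
  (forall a, R a <-> P a \/ Q a) -> (forall a b, P a -> Q b -> plt a b) ->
  weq (sub x R) (concat (sub x P) (sub x Q)).
Proof.
move=> wx RPQ PQ; apply: weq_sym.
apply: (@weq_of_mono _ (concat (sub x P) (sub x Q)) (sub x R) (fun s => match s with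
  | inl s => exist R (sval s) (proj2 (RPQ _) (or_introl (svalP s)))
  | inr s => exist R (sval s) (proj2 (RPQ _) (or_intror (svalP s))) end)) => //.
- by move=> [[a Pa]|[a Qa]] [[b Pb]|[b Qb]] //= _; apply: PQ.
- move=> [a Ra]; case: (proj1 (RPQ a) Ra) => [Pa|Qa].
    by exists (inl (exist P a Pa)); apply: sub_inj.
  by exists (inr (exist Q a Qa)); apply: sub_inj.
- by case.
Qed.

Lemma split_sub x (P Q : pos x -> Prop) : is_word x ->
  (forall a, P a \/ Q a) -> (forall a b, P a -> Q b -> plt a b) ->
  weq x (concat (sub x P) (sub x Q)).
Proof.
move=> wx PQ lt; apply: weq_trans (weq_sym (sub_True wx)) _.
by apply: sub_concat => // a; split=> // _; apply: PQ.
Qed.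

Lemma down_closed_lt x (P : pos x -> Prop) : is_word x -> down_closed P ->
  forall a b, P a -> ~ P b -> plt a b.
Proof.
move=> wx dP a b Pa Pb; case: (plt_total wx a b) => [// | [E | ba]].
  by rewrite E in Pa.
by case: Pb; apply: dP Pa.
Qed.

Lemma down_closed_total x (P Q : pos x -> Prop) : is_word x ->
  down_closed P -> down_closed Q -> (forall a, P a -> Q a) \/ (forall a, Q a -> P a).
Proof.
move=> wx dP dQ; case: (classic (exists2 a, P a & ~ Q a)) => [[a Pa nQa] | noPQ].
  right=> b Qb; apply: NNPP => nPb.
  by apply: nQa; apply: dQ Qb; apply: down_closed_lt Pa nPb.
by left=> a Pa; apply: NNPP => nQa; apply: noPQ; exists a.
Qed.

Lemma split_down x (P : pos x -> Prop) : is_word x -> down_closed P ->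
  weq x (concat (sub x P) (sub x (fun a => ~ P a))).
Proof.
move=> wx dP; apply: split_sub => // [a | ]; first exact: classic.
exact: down_closed_lt.
Qed.

Lemma cut_of_concat y p m : is_word y -> is_word p -> is_word m -> weq y (concat p m) ->
  exists2 P : pos y -> Prop, down_closed P &
    weq p (sub y P) /\ weq m (sub y (fun a => ~ P a)).
Proof.
move=> wy wp wm E; have [g [f [fg [gf [mono lblg]]]]] := weq_sym E.
have f_mono a b : plt a b -> plt (f a) (f b) by rewrite mono !gf.
pose P a := exists c, f a = inl c.
have g_inl c : P (g (inl c)) by exists c; rewrite fg.
have g_inr c : ~ P (g (inr c)) by case=> c'; rewrite fg.
exists P; last split.
- move=> a b /f_mono + [c fb]; rewrite fb /P.
  by case: (f a) => [c' _ | c' []]; exists c'.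
- apply: (@weq_of_mono _ p (sub y P) (fun c => exist P (g (inl c)) (g_inl c))) => //.
  + by move=> c c' /= cc'; rewrite -(mono (inl c) (inl c')).
  + move=> [a [c fa]]; exists c; apply: sub_inj => /=.
    by rewrite -fa gf.
  + by move=> c; rewrite /= lblg.
- apply: (@weq_of_mono _ m (sub y (fun a => ~ P a))
    (fun c => exist (fun a => ~ P a) (g (inr c)) (g_inr c))) => //.
  + by move=> c c' /= cc'; rewrite -(mono (inr c) (inr c')).
  + move=> [a Pa]; case E': (f a) => [c | c]; first by case: Pa; exists c.
    by exists c; apply: sub_inj => /=; rewrite -E' gf.
  + by move=> c; rewrite /= lblg.
Qed.

Lemma levi y p m q n : is_word y -> is_word p -> is_word m -> is_word q -> is_word n ->
  weq y (concat p m) -> weq y (concat q n) ->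
  (exists2 k, is_word k & weq q (concat p k) /\ weq m (concat k n)) \/
  (exists2 k, is_word k & weq p (concat q k) /\ weq n (concat k m)).
Proof.
move=> wy wp wm wq wn /(cut_of_concat wy wp wm) [P dP [Ep Em]].
move=> /(cut_of_concat wy wq wn) [Q dQ [Eq En]].
wlog PQ : p m q n wp wm wq wn P Q dP dQ Ep Em Eq En / forall a, P a -> Q a.
  move=> hyp; case: (down_closed_total wy dP dQ) => [|QP]; first exact: hyp.
  by case: (hyp q n p m wq wn wp wm Q P) => //; [right | left].
left; exists (sub y (fun a => Q a /\ ~ P a)); first exact: is_word_sub.
split.
- rewrite Eq Ep; apply: sub_concat => // [a | a b Pa [_ Pb]].
    by case: (classic (P a)); intuition.
  exact: down_closed_lt Pa Pb.
- rewrite Em En; apply: sub_concat => // [a | a b [Qa _] Qb].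
    by case: (classic (Q a)); intuition.
  exact: down_closed_lt Qa Qb.
Qed.

Lemma sub_absorb_empty x (P : pos x -> Prop) (t : rword L) :
  is_word x -> weq (sub x P) (concat x t) -> ~ nonempty t.
Proof.
move=> wx /weq_sym [f [_ [_ [_ [mono _]]]]].
by apply: (mono_concat_empty (f := fun s => sval (f s)) wx) => a b /mono.
Qed.

End Subwords.

(** * Positions and powers *)

Definition pre (L : Type) (x : rword L) (c : pos x) := sub x (fun a => plt a c).
Definition sfx (L : Type) (x : rword L) (c : pos x) := sub x (fun a => ~ plt a c).
Definition sfxs (L : Type) (x : rword L) (c : pos x) := sub x (fun a => plt c a).
Arguments pre {L} x c.
Arguments sfx {L} x c.
Arguments sfxs {L} x c.

Lemma is_word_pre (L : Type) (x : rword L) c : is_word x -> is_word (pre x c).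
Proof. exact: is_word_sub. Qed.

Lemma is_word_sfx (L : Type) (x : rword L) c : is_word x -> is_word (sfx x c).
Proof. exact: is_word_sub. Qed.

Lemma is_word_sfxs (L : Type) (x : rword L) c : is_word x -> is_word (sfxs x c).
Proof. exact: is_word_sub. Qed.

#[global] Hint Resolve is_word_pre is_word_sfx is_word_sfxs : word.

Section Positions.
Variable L : Type.
Implicit Types x y z : rword L.

Lemma concat_pre_sfx x c : is_word x -> weq x (concat (pre x c) (sfx x c)).
Proof. by move=> wx; apply: split_down => // a b ab /=; apply: (plt_trans wx ab). Qed.

Lemma sfx_letter x c : is_word x -> weq (sfx x c) (concat (letter (lbl c)) (sfxs x c)).
Proof.
move=> wx; apply: weq_sym.
have sfx_c : ~ plt c c := plt_irr wx c.
have sfx_sfxs (s : pos (sfxs x c)) : ~ plt (sval s) c.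
  by case: s => a ca /= ac; apply: plt_irr wx c (plt_trans wx ca ac).
apply: (@weq_of_mono _ (concat (letter (lbl c)) (sfxs x c)) (sfx x c) (fun s =>
  match s with inl _ => exist _ c sfx_c | inr s => exist _ (sval s) (sfx_sfxs s) end)) => //.
- by move=> [[]|[a ca]] [[]|[b cb]].
- move=> [a na]; case: (plt_total wx c a) => [ca | [ca | //]].
    by exists (inr (exist _ a ca)); apply: sub_inj.
  by exists (inl tt); apply: sub_inj.
- by case.
Qed.

Lemma split_at_pos x y z : is_word x -> is_word y -> is_word z ->
  weq x (concat y z) -> nonempty z ->
  exists c : pos x, weq y (pre x c) /\ weq z (sfx x c).
Proof.
move=> wx wy wz E [z0]; have [P dP [Ey Ez]] := cut_of_concat wx wy wz E.
have [c nPc minc] : exists2 c, ~ P c & forall a, ~ P a -> ~ plt a c.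
  by apply: plt_min => //; case: Ez => f _; exists (sval (f z0)); apply: (svalP (f z0)).
have P_lt a : P a <-> plt a c.
  split=> [Pa | ac]; first exact: (down_closed_lt wx dP Pa nPc).
  by apply: NNPP => nPa; apply: minc nPa ac.
exists c; split.
  by rewrite Ey; apply: sub_ext.
by rewrite Ez; apply: sub_ext => // a; rewrite P_lt.
Qed.

Lemma sfx_first x c : is_word x -> (forall a, ~ plt a c) -> weq (sfx x c) x.
Proof. by move=> wx minc; rewrite -[X in weq _ X](sub_True wx); apply: sub_ext. Qed.

Lemma first_letter_split x c : is_word x -> (forall a, ~ plt a c) ->
  weq x (concat (letter (lbl c)) (sfxs x c)).
Proof. by move=> wx minc; rewrite -sfx_letter // sfx_first. Qed.

Lemma sfx_concat_l x y a : is_word x -> is_word y ->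
  weq (sfx (concat x y) (inl a)) (concat (sfx x a) y).
Proof.
move=> wx wy; apply: weq_sym.
have not_lt b : ~ @plt L (concat x y) (inr b) (inl a) by [].
apply: (@weq_of_mono _ (concat (sfx x a) y) (sfx (concat x y) (inl a)) (fun s =>
  match s with inl s => exist _ (inl (sval s)) (svalP s)
             | inr b => exist _ (inr b) (not_lt b) end)) => //.
- by move=> [[b hb]|b] [[b' hb']|b'].
- move=> [[b|b] hb]; first by exists (inl (exist _ b hb)); apply: sub_inj.
  by exists (inr b); apply: sub_inj.
- by case.
Qed.

Lemma sfx_concat_r x y b : is_word x -> is_word y ->
  weq (sfx (concat x y) (inr b)) (sfx y b).
Proof.
move=> wx wy; apply: weq_sym.
apply: (@weq_of_mono _ (sfx y b) (sfx (concat x y) (inr b))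
  (fun s => exist _ (inr (sval s)) (svalP s))) => //.
move=> [[a|a] ha]; first by case: ha.
by exists (exist _ a ha); apply: sub_inj.
Qed.

Lemma pre_pre x c (e : pos (pre x c)) : is_word x -> weq (pre (pre x c) e) (pre x (sval e)).
Proof.
move=> wx.
apply: (@weq_of_mono _ (pre (pre x c) e) (pre x (sval e))
  (fun s => exist _ (sval (sval s)) (svalP s))) => //.
move=> [a ae]; have ac : plt a c := plt_trans wx ae (svalP e).
by exists (exist _ (exist _ a ac) ae); apply: sub_inj.
Qed.

End Positions.

Lemma word_prefix_ind (L : Type) (Q : rword L -> Prop) :
  (forall x y, weq x y -> Q x -> Q y) ->
  (forall x, is_word x -> (forall c, Q (pre x c)) -> Q x) ->
  forall x, is_word x -> Q x.
Proof.
move=> QE step x wx; apply: (step) => // c.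
elim/(plt_ind wx): c => c IH; apply: (step) => [|e]; first exact: is_word_pre.
exact: (QE _ _ (weq_sym (pre_pre e wx)) (IH _ (svalP e))).
Qed.

Lemma is_word_wpow (L : Type) (u : rword L) (b : cordinal) :
  is_word u -> is_word b -> is_word (wpow u b).
Proof.
move=> wu wb; split; [|split; [|split; [|split]]].
- by move=> [e p] /= [/(plt_irr wb) | [_ /(plt_irr wu)]].
- move=> [e1 p1] [e2 p2] [e3 p3] /= [lt12 | [-> lt12]] [lt23 | [<- lt23]]; auto.
  + by left; apply: (plt_trans wb lt12 lt23).
  + by right; split; last apply: (plt_trans wu lt12 lt23).
- move=> [e1 p1] [e2 p2] /=; case: (plt_total wb e1 e2) => [|[<-|]]; auto.
  by case: (plt_total wu p1 p2) => [|[<-|]]; auto.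
- move=> [e p]; elim/(plt_ind wb): e p => e IHe p.
  elim/(plt_ind wu): p => p IHp.
  by constructor=> -[e' p'] /= [/IHe | [-> /IHp]].
- case: wu => _ [_ [_ [_ [f inj_f]]]]; case: wb => _ [_ [_ [_ [g inj_g]]]].
  exists (fun s => Cantor.to_nat (g s.1, f s.2)).
  by move=> [e p] [e' p'] /Cantor.to_nat_inj [/inj_g -> /inj_f ->].
Qed.

#[global] Hint Resolve is_word_wpow : word.

Lemma wpow_weq (L : Type) (u u' : rword L) (b b' : cordinal) :
  weq u u' -> weq b b' -> weq (wpow u b) (wpow u' b').
Proof.
case=> f [g [gf [fg [mono lblf]]]] [f' [g' [gf' [fg' [mono' lblf']]]]].
exists (fun s => (f' s.1, f s.2)), (fun s => (g' s.1, g s.2)); do !split.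
- by move=> [e p] /=; rewrite gf gf'.
- by move=> [e p] /=; rewrite fg fg'.
- by case: p q => [e p] [e' p'] /= [/mono' | [-> /mono]]; auto.
- case: p q => [e p] [e' p'] /= [/mono' | [E /mono]]; auto.
  by right; split; rewrite // -[e]gf' E gf'.
- by case=> e p /=; rewrite lblf.
Qed.

Add Parametric Morphism (L : Type) : (@wpow L)
  with signature @weq L ==> @weq unit ==> @weq L as wpow_morph.
Proof. by move=> u u' E b b' F; apply: wpow_weq. Qed.

Section Powers.
Variable L : Type.
Implicit Types u x y : rword L.

Lemma wpow_concat u (b c : cordinal) :
  weq (wpow u (concat b c)) (concat (wpow u b) (wpow u c)).
Proof.
exists (fun s => match s with (inl e, p) => inl (e, p) | (inr e, p) => inr (e, p) end).
exists (fun s => match s with inl (e, p) => (inl e, p) | inr (e, p) => (inr e, p) end).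
split; [by move=> [[e|e] p] | split; [by move=> [[e p]|[e p]] | split]]; last by move=> [[e|e] p].
move=> [[e|e] p] [[e'|e'] p'] /=.
- by split=> [[lt | [[->] lt]] | [lt | [-> lt]]]; auto.
- by split=> // _; left.
- by split=> [[[] | [] ] | []].
- by split=> [[lt | [[->] lt]] | [lt | [-> lt]]]; auto.
Qed.

Lemma wpow_letter u (t : unit) : weq (wpow u (letter t)) u.
Proof.
exists snd, (pair tt); split; [by move=> [[] p] | split; [by [] | split]]; last by [].
by move=> [[] p] [[] q] /=; split=> [[[] | [_ lt]] | lt] //; right.
Qed.

Lemma nonempty_wpow u (b : cordinal) : nonempty (wpow u b) <-> nonempty u /\ nonempty b.
Proof. by split=> [[[e p]] | [[p] [e]]]; [split | exists]; exists. Qed.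

Lemma sfx_wpow u (b : cordinal) (e : pos b) (p : pos u) : is_word u -> is_word b ->
  weq (sfx (wpow u b) (e, p)) (concat (sfx u p) (wpow u (sfxs b e))).
Proof.
move=> wu wb; apply: weq_sym.
have in_block (s : pos (sfx u p)) : ~ @plt _ (wpow u b) (e, sval s) (e, p).
  by case: s => q nqp /= [/(plt_irr wb) | [_ /nqp]].
have in_tail (s : pos (wpow u (sfxs b e))) : ~ @plt _ (wpow u b) (sval s.1, s.2) (e, p).
  case: s => -[e' ee'] q /= [e'e | [E _]]; first exact: (plt_irr wb _ (plt_trans wb ee' e'e)).
  by move: ee'; rewrite E => /(plt_irr wb).
apply: (@weq_of_mono _ (concat (sfx u p) (wpow u (sfxs b e))) (sfx (wpow u b) (e, p)) (fun s =>
  match s with inl s => exist _ (e, sval s) (in_block s)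
             | inr s => exist _ (sval s.1, s.2) (in_tail s) end)) => //.
- move=> [[q hq]|[[e1 h1] q]] [[q' hq']|[[e2 h2] q']] //=; first by right.
  + by left.
  + by case=> [lt | [[->] lt]]; [left | right].
- move=> [[e' q] h]; case: (plt_total wb e e') => [ee' | [E | e'e]].
  + by exists (inr (exist _ e' ee', q)); apply: (@sub_inj _ (wpow u b)).
  + move: h; rewrite /= -E => h.
    have nqp : ~ plt q p by move=> qp; apply: h; right.
    by exists (inl (exist _ q nqp)); apply: (@sub_inj _ (wpow u b)).
  + by case: h; left.
- by case.
Qed.

Lemma pre_wpow u (b : cordinal) (e : pos b) (p : pos u) : is_word u -> is_word b ->
  weq (pre (wpow u b) (e, p)) (concat (wpow u (pre b e)) (pre u p)).
Proof.
move=> wu wb; apply: weq_sym.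
have in_block (s : pos (pre u p)) : @plt _ (wpow u b) (e, sval s) (e, p).
  by case: s => q qp; right.
have in_head (s : pos (wpow u (pre b e))) : @plt _ (wpow u b) (sval s.1, s.2) (e, p).
  by case: s => -[e' e'e] q; left.
apply: (@weq_of_mono _ (concat (wpow u (pre b e)) (pre u p)) (pre (wpow u b) (e, p)) (fun s =>
  match s with inl s => exist _ (sval s.1, s.2) (in_head s)
             | inr s => exist _ (e, sval s) (in_block s) end)) => //.
- move=> [[[e1 h1] q]|[q hq]] [[[e2 h2] q']|[q' hq']] //=; last by right.
  + by case=> [lt | [[->] lt]]; [left | right].
  + by left.
- move=> [[e' q] /= [e'e | [E qp]]].
    by exists (inl (exist _ e' e'e, q)); apply: (@sub_inj _ (wpow u b)).
  by exists (inr (exist _ q qp)); apply: (@sub_inj _ (wpow u b)); rewrite /= E.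
- by case.
Qed.

Lemma wpow_self_one y (beta : cordinal) : is_word y -> is_word beta -> nonempty y ->
  weq y (wpow y beta) -> weq beta ord_one.
Proof.
move=> wy wbeta ny E; have [_ [b0]] : nonempty y /\ nonempty beta by rewrite -nonempty_wpow -E.
have [b1 _ minb1] := plt_min wbeta (ex_intro (fun=> True) b0 I).
have Ebeta := first_letter_split wbeta (fun a ab1 => minb1 a I ab1).
have Ey : weq y (concat y (wpow y (sfxs beta b1))) by rewrite {1}E {1}Ebeta wpow_concat wpow_letter.
have nS : ~ nonempty (sfxs beta b1).
  by move=> nS; apply: (absorb_empty wy Ey); apply/nonempty_wpow.
by rewrite Ebeta concat_empty_r //; case: (lbl b1).
Qed.

End Powers.


(** * Comparing two words *)

Section Matching.
Variables (L : Type) (x y : rword L).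
Hypotheses (wx : is_word x) (wy : is_word y).

(* [match_pos p] is the least position of [y] above the images of all positions
   below [p], if any: the canonical attempt to embed [x] into [y]. *)
Definition match_step (p : pos x) (rec : forall p', plt p' p -> option (pos y)) :=
  let bound q := forall p' (lt : plt p' p), exists q', rec p' lt = Some q' /\ plt q' q in
  match excluded_middle_informative (exists q, bound q /\ forall q', bound q' -> ~ plt q' q) with
  | left H => Some (proj1_sig (constructive_indefinite_description _ H))
  | right _ => None
  end.

Definition match_pos : pos x -> option (pos y) := Fix (plt_wf wx) _ match_step.

Definition matched_below p q :=
  forall p', plt p' p -> exists q', match_pos p' = Some q' /\ plt q' q.

Lemma match_pos_spec p :
  (exists q, [/\ match_pos p = Some q, matched_below p q &
                forall q', matched_below p q' -> ~ plt q' q]) \/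
  (match_pos p = None /\ forall q, ~ matched_below p q).
Proof.
have -> : match_pos p = @match_step p (fun p' _ => match_pos p').
  rewrite /match_pos Fix_eq // => p0 f g fg.
  have -> // : f = g.
  by apply: functional_extensionality_dep => p'; apply: functional_extensionality.
rewrite /match_step; case: excluded_middle_informative => [H | noleast].
  by left; case: (constructive_indefinite_description _ H) => q [] /=; exists q.
right; split=> // q aq; apply: noleast.
by have [m am minm] := plt_min wy (ex_intro _ q aq); exists m.
Qed.

Lemma match_pos_mono p q : match_pos p = Some q ->
  forall p', plt p' p -> exists q', match_pos p' = Some q' /\ plt q' q.
Proof. by case: (match_pos_spec p) => [[q0 [-> aq _]] [<-] | [-> _]]. Qed.

Lemma match_pos_down p q : match_pos p = Some q ->
  forall q', plt q' q -> exists2 p', plt p' p & match_pos p' = Some q'.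
Proof.
elim/(plt_ind wx): p q => p IH q mp q' q'q.
case: (match_pos_spec p) => [[q0 [mp0 aq minq]] | [mp0 _]]; last by rewrite mp0 in mp.
move: mp0 aq minq; rewrite mp => -[<-] aq minq.
have [p' p'p nlt] : exists2 p', plt p' p & ~ exists q1, match_pos p' = Some q1 /\ plt q1 q'.
  apply: NNPP => none; apply: (minq q' _ q'q) => p' p'p.
  by apply: NNPP => nex; apply: none; exists p'.
have [q1 [mp' q1q]] := match_pos_mono mp p'p.
case: (plt_total wy q1 q') => [q1q' | [E | q'q1]].
- by case: nlt; exists q1.
- by exists p'; rewrite // -E.
- by have [p0 p0p' mp0] := IH _ p'p _ mp' _ q'q1; exists p0 => //; apply: (plt_trans wx p0p' p'p).
Qed.

Lemma match_pos_onto p : match_pos p = None -> (forall p', plt p' p -> match_pos p' <> None) ->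
  forall q, exists2 p', plt p' p & match_pos p' = Some q.
Proof.
move=> mp defined q; case: (match_pos_spec p) => [[q0 [] ] | [_ nobound]]; first by rewrite mp.
have [p' p'p nlt] : exists2 p', plt p' p & ~ exists q1, match_pos p' = Some q1 /\ plt q1 q.
  apply: NNPP => none; apply: (nobound q) => p' p'p.
  by apply: NNPP => nex; apply: none; exists p'.
case E: (match_pos p') => [q1|]; last by case: (defined _ p'p E).
case: (plt_total wy q1 q) => [q1q | [<- | qq1]]; first by case: nlt; exists q1.
  by exists p'.
by have [p0 p0p' mp0] := match_pos_down E qq1; exists p0 => //; apply: (plt_trans wx p0p' p'p).
Qed.

Definition match_image (D : pos x -> Prop) (q : pos y) := exists2 p, D p & match_pos p = Some q.

Lemma match_image_down_closed D : down_closed D -> down_closed (match_image D).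
Proof.
move=> dD q' q q'q [p Dp mp]; have [p' p'p mp'] := match_pos_down mp q'q.
by exists p' => //; apply: dD p'p Dp.
Qed.

Lemma match_pos_weq D : down_closed D ->
  (forall p, D p -> exists2 q, match_pos p = Some q & lbl q = lbl p) ->
  weq (sub x D) (sub y (match_image D)).
Proof.
move=> dD good.
have [f fP] : exists f : pos (sub x D) -> pos y,
    forall s, match_pos (sval s) = Some (f s) /\ lbl (f s) = lbl (sval s).
  apply: (choice (fun s q => match_pos (sval s) = Some q /\ lbl q = lbl (sval s))) => -[p Dp].
  by have [q mp lq] := good p Dp; exists q.
have f_img s : match_image D (f s) by exists (sval s); [exact: svalP | case: (fP s)].
apply: (@weq_of_mono _ (sub x D) (sub y (match_image D)) (fun s => exist _ (f s) (f_img s))) => //.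
- move=> s t st /=; case: (fP t) => /match_pos_mono /(_ _ st) [q' [mps q't]] _.
  by case: (fP s); rewrite mps => -[<-].
- move=> [q [p Dp mp]]; exists (exist _ p Dp); apply: sub_inj => /=.
  by case: (fP (exist _ p Dp)); rewrite /= mp => -[].
- by move=> s /=; case: (fP s).
Qed.

Lemma prefix_or_mismatch :
  wprefix x y \/ wprefix y x \/ exists c d, lbl c <> lbl d /\ weq (pre x c) (pre y d).
Proof.
pose bad p := match_pos p = None \/ exists2 q, match_pos p = Some q & lbl q <> lbl p.
have good_of_not_bad p : ~ bad p -> exists2 q, match_pos p = Some q & lbl q = lbl p.
  move=> nb; case E: (match_pos p) => [q|]; last by case: nb; left.
  by exists q => //; apply: NNPP => ne; apply: nb; right; exists q.
case: (classic (exists p, bad p)) => [somebad | nobad].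
  have [ps bad_ps minps] := plt_min wx somebad.
  have lt_ps : down_closed (fun p => plt p ps) by move=> a b ab; apply: (plt_trans wx ab).
  have E := match_pos_weq lt_ps (fun p pps => good_of_not_bad p (fun bp => minps p bp pps)).
  case: bad_ps => [mps | [qs mps nlbl]].
    right; left; exists (sfx x ps); split; first exact: is_word_sfx.
    rewrite {1}(concat_pre_sfx ps wx) [pre x ps]E; apply: concat_weq => //.
    rewrite -[X in weq _ X](sub_True wy); apply: sub_ext => // q; split=> // _.
    apply: match_pos_onto => // p pps.
    by case: (good_of_not_bad p (fun bp => minps p bp pps)) => q' ->.
  right; right; exists ps, qs; split; first by move/esym.
  rewrite [pre x ps]E; apply: sub_ext => // q; split=> [[p pps mp] | qqs].
    by have [q' [] ] := match_pos_mono mps pps; rewrite mp => -[<-].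
  by have [p pps mp] := match_pos_down mps qqs; exists p.
have all_good p : exists2 q, match_pos p = Some q & lbl q = lbl p.
  by apply: good_of_not_bad => bp; apply: nobad; exists p.
left; exists (sub y (fun q => ~ match_image (fun _ => True) q)); split; first exact: is_word_sub.
rewrite {1}(split_down wy (match_image_down_closed (D := fun _ => True) (fun _ _ _ _ => I))).
rewrite -(match_pos_weq (D := fun _ => True) (fun _ _ _ _ => I) (fun p _ => all_good p)).
by rewrite sub_True.
Qed.

End Matching.

Lemma cordinal_sub_prefix (b : cordinal) (P : pos b -> Prop) : is_word b -> wprefix (sub b P) b.
Proof.
move=> wb; case: (prefix_or_mismatch (is_word_sub P wb) wb) => [// | [[z [wz E]] | [c [d []]]]].
  exists wempty; split=> //; rewrite concat_empty_r; last exact: nonempty_wempty.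
  by rewrite E concat_empty_r //; apply: (sub_absorb_empty wb E).
by case: (lbl c); case: (lbl d).
Qed.

Section Letters.
Variable L : Type.
Implicit Types p q r k t x y : rword L.

Lemma letter_inj (a b : L) : weq (letter a) (letter b) -> a = b.
Proof. by case=> f [_ [_ [_ [_ /(_ tt)]]]]. Qed.

Lemma letter_split (a : L) p k : is_word p -> is_word k -> weq (letter a) (concat p k) ->
  (~ nonempty p /\ weq k (letter a)) \/ (~ nonempty k /\ weq p (letter a)).
Proof.
move=> wp wk E; case: (E) => f [g [gf [fg [_ lblf]]]].
have only (s : pos (concat p k)) : s = f tt by rewrite -(fg s); case: (g s).
case E': (f tt) => [c | c].
- right; split=> [[d] | ]; first by have := only (inr d); rewrite E'.
  apply: weq_sym; apply: (@weq_of_mono _ (letter a) p (fun _ => c)) => //.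
  + by move=> d; exists tt; have := only (inl d); rewrite E' => -[].
  + by move=> []; have := lblf tt; rewrite E'.
- left; split=> [[d] | ]; first by have := only (inl d); rewrite E'.
  apply: weq_sym; apply: (@weq_of_mono _ (letter a) k (fun _ => c)) => //.
  + by move=> d; exists tt; have := only (inr d); rewrite E' => -[].
  + by move=> []; have := lblf tt; rewrite E'.
Qed.

Lemma letter_concat_inj (a b : L) r t : is_word r -> is_word t ->
  weq (concat (letter a) r) (concat (letter b) t) -> a = b /\ weq r t.
Proof.
move=> wr wt E; have wa := is_word_letter a; have wb := is_word_letter b.
case: (levi (is_word_concat wa wr) wa wr wb wt (weq_refl _) E) => [[k wk [Eb Er]] | [k wk [Ea Et]]].
  case: (letter_split wa wk Eb) => [[/(_ (nonempty_letter a)) //] | [nk Eab]].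
  by split; [apply: letter_inj | rewrite Er concat_empty_l].
case: (letter_split wb wk Ea) => [[/(_ (nonempty_letter b)) //] | [nk Eab]].
by split; [apply/esym/letter_inj | rewrite Et concat_empty_l].
Qed.

Lemma letter_concat_prefix (c : L) t k r : is_word t -> is_word k -> is_word r ->
  weq (concat (letter c) t) (concat k r) -> nonempty k ->
  exists2 k1, is_word k1 & weq k (concat (letter c) k1) /\ weq t (concat k1 r).
Proof.
move=> wt wk wr E nk; have wc := is_word_letter c.
case: (levi (is_word_concat wc wt) wc wt wk wr (weq_refl _) E) => [// | [k1 wk1 [Ec Er]]].
case: (letter_split wk wk1 Ec) => [[/(_ nk) //] | [nk1 Ek]].
exists wempty => //; split; first by rewrite concat_empty_r.
by rewrite concat_empty_l // Er concat_empty_l.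
Qed.

Lemma levi_letter x y p (b : L) r : is_word x -> is_word y -> is_word p -> is_word r ->
  weq (concat x y) (concat p (concat (letter b) r)) ->
  (exists2 k, is_word k & weq p (concat x k) /\ weq y (concat k (concat (letter b) r))) \/
  (exists2 k, is_word k & weq x (concat p (concat (letter b) k)) /\ weq r (concat k y)).
Proof.
move=> wx wy wp wr E; have wbr := is_word_concat (is_word_letter b) wr.
case: (levi (is_word_concat wx wy) wx wy wp wbr (weq_refl _) E) => [| [k wk [Ex Ebr]]].
  by left.
case: (classic (nonempty k)) => [nk | nk].
  have [k1 wk1 [Ek Er]] := letter_concat_prefix wr wk wy Ebr nk.
  by right; exists k1 => //; rewrite Ex Ek.
left; exists wempty => //; split; first by rewrite concat_empty_r // Ex concat_empty_r.
by rewrite concat_empty_l // Ebr concat_empty_l.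
Qed.

Lemma letter_factors_cmp y p q (a b : L) r t : is_word y -> is_word p -> is_word q ->
  is_word r -> is_word t ->
  weq y (concat p (concat (letter a) r)) -> weq y (concat q (concat (letter b) t)) ->
  [\/ [/\ weq p q, a = b & weq r t],
      exists2 k, is_word k &
        weq q (concat p (concat (letter a) k)) /\ weq r (concat k (concat (letter b) t))
    | exists2 k, is_word k &
        weq p (concat q (concat (letter b) k)) /\ weq t (concat k (concat (letter a) r))].
Proof.
move=> wy wp wq wr wt Ea Eb; have war := is_word_concat (is_word_letter a) wr.
case: (levi_letter wp war wq wt (weq_trans (weq_sym Ea) Eb)) => [[k wk [Eq Ear]] | ]; last first.
  by move=> ?; constructor 3.
case: (classic (nonempty k)) => [nk | nk].
  have [k1 wk1 [Ek Er]] := letter_concat_prefix wr wk (is_word_concat (is_word_letter b) wt) Ear nk.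
  by constructor 2; exists k1 => //; rewrite Eq Ek.
rewrite (concat_empty_l _ nk) in Ear; have [-> Ert] := letter_concat_inj wr wt Ear.
by constructor 1; split=> //; rewrite Eq concat_empty_r.
Qed.

End Letters.

(** * The lexicographic order *)

Add Parametric Morphism (L : Type) : (@wprefix L)
  with signature @weq L ==> @weq L ==> iff as wprefix_morph.
Proof.
move=> x x' Ex y y' Ey; split=> -[z [wz E]]; exists z; split=> //.
  by rewrite -Ex -Ey.
by rewrite Ex Ey.
Qed.

Section Lex.
Context {d : Order.disp_t} {A : orderType d}.
Implicit Types x y z p q r t k : rword A.

Lemma str_ltI p r t (a b : A) x y : is_word p -> is_word r -> is_word t -> (a < b)%O ->
  weq x (concat p (concat (letter a) r)) -> weq y (concat p (concat (letter b) t)) ->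
  str_lt x y.
Proof. by move=> *; exists p, r, t, a, b. Qed.

Lemma str_lt_weq x x' y y' : weq x x' -> weq y y' -> str_lt x y -> str_lt x' y'.
Proof.
move=> Ex Ey [p [r [t [a [b [wp [wr [wt [ab [E1 E2]]]]]]]]]].
by apply: (str_ltI wp wr wt ab); [rewrite -Ex | rewrite -Ey].
Qed.

Lemma lex_le_weq x x' y y' : weq x x' -> weq y y' -> lex_le x y -> lex_le x' y'.
Proof.
move=> Ex Ey [pxy | sxy]; first by left; rewrite -Ex -Ey.
by right; apply: (str_lt_weq Ex Ey).
Qed.

End Lex.

Add Parametric Morphism (d : Order.disp_t) (A : orderType d) : (@str_lt d A)
  with signature @weq A ==> @weq A ==> iff as str_lt_morph.
Proof. by move=> x x' Ex y y' Ey; split; apply: str_lt_weq => //; apply: weq_sym. Qed.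

Add Parametric Morphism (d : Order.disp_t) (A : orderType d) : (@lex_le d A)
  with signature @weq A ==> @weq A ==> iff as lex_le_morph.
Proof. by move=> x x' Ex y y' Ey; split; apply: lex_le_weq => //; apply: weq_sym. Qed.

Section LexTheory.
Context {d : Order.disp_t} {A : orderType d}.
Implicit Types x y z p q r t k : rword A.

Lemma wprefix_refl x : wprefix x x.
Proof. by exists wempty; split=> //; rewrite concat_empty_r. Qed.

Lemma lex_le_refl x : lex_le x x.
Proof. by left; apply: wprefix_refl. Qed.

Lemma lex_le_of_weq x y : weq x y -> lex_le x y.
Proof. by move=> ->; apply: lex_le_refl. Qed.

Lemma wprefix_trans x y z : wprefix x y -> wprefix y z -> wprefix x z.
Proof.
move=> [s [ws Ey]] [t [wt Ez]]; exists (concat s t); split; first exact: is_word_concat.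
by rewrite Ez Ey concat_assoc.
Qed.

Lemma str_lt_nonempty x y : str_lt x y -> nonempty x.
Proof.
move=> [p [r [t [a [b [_ [_ [_ [_ [Ex _]]]]]]]]]].
by rewrite Ex; apply/nonempty_concat; right; apply/nonempty_concat; left; apply: nonempty_letter.
Qed.

Lemma str_lt_irr x : is_word x -> ~ str_lt x x.
Proof.
move=> wx [p [r [t [a [b [wp [wr [wt [ab [E1 E2]]]]]]]]]].
case: (letter_factors_cmp wx wp wp wr wt E1 E2) => [[_ eab _] | [k wk [Ep _]] | [k wk [Ep _]]].
- by move: ab; rewrite eab ltxx.
- by apply: (absorb_empty wp Ep); apply/nonempty_concat; left; apply: nonempty_letter.
- by apply: (absorb_empty wp Ep); apply/nonempty_concat; left; apply: nonempty_letter.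
Qed.

Lemma str_lt_lex_trans x y z : is_word y -> str_lt x y -> lex_le y z -> str_lt x z.
Proof.
move=> wy [p [r [t [a [b [wp [wr [wt [ab [Ex Ey]]]]]]]]]] [[s [ws Ez]] | ].
  apply: (str_ltI (t := concat t s) wp wr _ ab Ex); first exact: is_word_concat.
  by rewrite Ez Ey !concat_assoc.
move=> [q [t0 [t' [c [e [wq [wt0 [wt' [ce [Ey' Ez]]]]]]]]]].
case: (letter_factors_cmp wy wp wq wt wt0 Ey Ey') => [[Epq bc _] | [k wk [Eq _]] | [k wk [Ep _]]].
- rewrite bc in ab; by apply: (str_ltI wp wr wt' (lt_trans ab ce) Ex); rewrite Ez Epq.
- apply: (str_ltI (t := concat k (concat (letter e) t')) wp wr _ ab Ex); first by auto.
  by rewrite Ez Eq !concat_assoc.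
- apply: (str_ltI (r := concat k (concat (letter a) r)) wq _ wt' ce _ Ez); first by auto.
  by rewrite Ex Ep !concat_assoc.
Qed.

Lemma lex_le_trans x y z : is_word x -> is_word y -> lex_le x y -> lex_le y z -> lex_le x z.
Proof.
move=> wx wy [pxy | sxy] yz; last by right; apply: (str_lt_lex_trans wy sxy yz).
case: yz => [pyz | [q [t0 [t' [c [e [wq [wt0 [wt' [ce [Ey Ez]]]]]]]]]]].
  by left; apply: (wprefix_trans pxy pyz).
case: pxy => s [ws Ey'].
case: (levi_letter wx ws wq wt0 (weq_trans (weq_sym Ey') Ey)) => [[k wk [Eq _]] | [k wk [Ex _]]].
  left; exists (concat k (concat (letter e) t')); split; first by auto.
  by rewrite Ez Eq concat_assoc.
by right; apply: (str_ltI wq wk wt' ce Ex Ez).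
Qed.

Lemma lex_le_antisym x y : is_word x -> is_word y -> lex_le x y -> lex_le y x -> weq x y.
Proof.
move=> wx wy [pxy | sxy] yx; last by case: (str_lt_irr wx (str_lt_lex_trans wy sxy yx)).
case: yx => [[t [wt Ex]] | syx]; last first.
  by case: (str_lt_irr wy (str_lt_lex_trans wx syx (or_introl pxy))).
case: pxy => s [ws Ey]; have Exx : weq x (concat x (concat s t)) by rewrite -concat_assoc -Ey.
have /nonempty_concat ns := absorb_empty wx Exx.
by rewrite Ey concat_empty_r // => nes; apply: ns; left.
Qed.

Lemma lex_le_concat2l p x y : is_word p -> lex_le x y -> lex_le (concat p x) (concat p y).
Proof.
move=> wp [[s [ws Ey]] | [q [r [t [a [b [wq [wr [wt [ab [Ex Ey]]]]]]]]]]].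
  by left; exists s; split=> //; rewrite Ey concat_assoc.
right; apply: (str_ltI (p := concat p q) _ wr wt ab); first exact: is_word_concat.
  by rewrite Ex concat_assoc.
by rewrite Ey concat_assoc.
Qed.

Lemma str_lt_concat x y r t : is_word r -> is_word t ->
  str_lt x y -> str_lt (concat x r) (concat y t).
Proof.
move=> wr wt [p [r1 [t1 [a [b [wp [wr1 [wt1 [ab [Ex Ey]]]]]]]]]].
apply: (str_ltI (r := concat r1 r) (t := concat t1 t) wp _ _ ab); try exact: is_word_concat.
  by rewrite Ex !concat_assoc.
by rewrite Ey !concat_assoc.
Qed.

Lemma lex_trichotomy x y : is_word x -> is_word y ->
  [\/ wprefix x y, wprefix y x, str_lt x y | str_lt y x].
Proof.
move=> wx wy; case: (prefix_or_mismatch wx wy) => [? | [? | [c [e [nce Epre]]]]].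
- by constructor 1.
- by constructor 2.
have Ex := weq_trans (concat_pre_sfx c wx) (concat_weq (weq_refl _) (sfx_letter c wx)).
have Ey := weq_trans (concat_pre_sfx e wy) (concat_weq (weq_refl _) (sfx_letter e wy)).
rewrite -Epre in Ey.
have /lt_total/orP[lt | lt] : lbl c != lbl e by apply/eqP.
  by constructor 3; apply: (str_ltI _ _ _ lt Ex Ey); auto.
by constructor 4; apply: (str_ltI _ _ _ lt Ey Ex); auto.
Qed.

End LexTheory.

(** * Prime words *)

Section PrimeWords.
Context {d : Order.disp_t} {A : orderType d}.
Implicit Types w x y z : rword A.

Lemma prime_nonempty w : is_word w -> prime_word w -> nonempty w.
Proof.
move=> ww [prim _]; apply: NNPP => nw.
have [one _] : weq (@wempty unit) ord_one /\ weq w w.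
  apply: prim => //; apply: weq_trans (weq_wempty nw) (weq_sym (weq_wempty _)).
  by case/nonempty_wpow => _; apply: nonempty_wempty.
by case: (weq_sym one) => f _; case: (f tt).
Qed.

Lemma prime_suffix_ge w x z : prime_word w -> is_word x -> is_word z ->
  weq w (concat x z) -> nonempty z -> lex_le w z.
Proof.
move=> [_ min] wx wz E nz; case: (classic (nonempty x)) => [nx | nx].
  by apply: min => //; exists x.
by apply: lex_le_of_weq; rewrite E concat_empty_l.
Qed.

Lemma prime_le_sfx w (c : pos w) : is_word w -> prime_word w -> lex_le w (sfx w c).
Proof.
move=> ww pw.
apply: (prime_suffix_ge pw (is_word_pre c ww) (is_word_sfx c ww) (concat_pre_sfx c ww)).
by exists; exists c; apply: plt_irr ww c.
Qed.

Lemma prime_no_str_suffix w x z : is_word w -> is_word x -> is_word z -> prime_word w ->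
  weq w (concat x z) -> ~ str_lt z w.
Proof.
move=> ww wx wz pw E zw; have wz_le := prime_suffix_ge pw wx wz E (str_lt_nonempty zw).
exact: (str_lt_irr wz (str_lt_lex_trans ww zw wz_le)).
Qed.

Lemma prime_sfx_cases w (c : pos w) : is_word w -> prime_word w ->
  weq (sfx w c) w \/ str_lt w (sfx w c).
Proof.
move=> ww pw; case: (prime_le_sfx c ww pw) => [[t [wt E]] | ]; last by right.
by left; rewrite E concat_empty_r //; apply: (sub_absorb_empty ww E).
Qed.

End PrimeWords.

Section PowerThenPrime.
Context {d : Order.disp_t} {A : orderType d}.
Variables u v : rword A.
Hypotheses (wu : is_word u) (wv : is_word v) (pu : prime_word u) (pv : prime_word v).
Hypothesis uv : lex_lt u v.

Lemma v_not_upow (J : cordinal) : is_word J -> ~ weq v (wpow u J).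
Proof.
move=> wJ E; case: uv => _; apply.
by have [_ ->] := proj1 pv u J wu wJ E.
Qed.

Lemma v_not_le_u : ~ lex_le v u.
Proof. by case: uv => le_uv nE le_vu; apply: nE; apply: lex_le_antisym. Qed.

Lemma uv_le_v : lex_le (concat u v) v.
Proof.
case: uv => -[[s [ws Ev]] | suv] nE.
  case: (classic (nonempty s)) => [ns | ns]; last by case: nE; rewrite Ev concat_empty_r.
  by rewrite {2}Ev; apply: lex_le_concat2l => //; apply: (prime_suffix_ge pv wu ws Ev ns).
right; rewrite -[X in str_lt _ X](concat_empty_r v (@nonempty_wempty A)).
exact: str_lt_concat.
Qed.

Lemma v_not_prefix_upow (J : cordinal) : is_word J -> ~ wprefix v (wpow u J).
Proof.
move=> wJ [k [wk E]]; case: (classic (nonempty k)) => [nk | nk]; last first.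
  by apply: (v_not_upow wJ); rewrite E concat_empty_r.
have [[e q] [Ev _]] := split_at_pos (is_word_wpow wu wJ) wv wk E nk.
rewrite pre_wpow // in Ev.
case: (classic (nonempty (pre u q))) => [nq | nq]; last first.
  by apply: (v_not_upow (is_word_pre e wJ)); rewrite Ev concat_empty_r.
apply: v_not_le_u; apply: (lex_le_trans wv (is_word_pre q wu)).
  exact: (prime_suffix_ge pv _ (is_word_pre q wu) Ev nq).
by left; exists (sfx u q); split; [apply: is_word_sfx | apply: concat_pre_sfx].
Qed.

Lemma upow_v_prefix (J : cordinal) : is_word J ->
  wprefix v (concat (wpow u J) v) -> weq (concat (wpow u J) v) v.
Proof.
move=> wJ [s [ws E]]; have wuJ := is_word_wpow wu wJ.
case: (levi (is_word_concat wuJ wv) wuJ wv wv ws (weq_refl _) E) => [[k wk [Ev Ev']] | [k wk Eu]].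
  case: (classic (nonempty k)) => [nk | nk]; last first.
    by case: (v_not_upow wJ); rewrite Ev concat_empty_r.
  have Ekv : weq k v.
    apply: lex_le_antisym => //; last exact: (prime_suffix_ge pv wuJ wk Ev nk).
    by left; exists s.
  rewrite Ekv in Ev'; have ns := absorb_empty wv Ev'.
  by rewrite E concat_empty_r.
by case: (v_not_prefix_upow wJ); exists k; split; case: Eu.
Qed.

Lemma v_not_str_lt_upow_v (J : cordinal) : is_word J ->
  (forall e : pos J, lex_le (concat (wpow u (concat (pre J e) (letter tt))) v) v) ->
  ~ str_lt v (concat (wpow u J) v).
Proof.
move=> wJ succ_le [p [r [t [a [b [wp [wr [wt [ab [Ev EW]]]]]]]]]].
have wuJ := is_word_wpow wu wJ.
case: (levi_letter wuJ wv wp wt EW) => [[k wk [Ep Ev']] | [k wk [Eu Et]]].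
  apply: (prime_no_str_suffix (z := concat k (concat (letter a) r)) wv wuJ _ pv).
  - by apply: is_word_concat => //; apply: is_word_concat.
  - by rewrite Ev Ep !concat_assoc.
  - by apply: (str_ltI wk wr wt ab).
(* Otherwise the letter [b] sits at position [q] of block [e] of [u^J], and
   [v <_str u^(e+1) v]. *)
have wbk := is_word_concat (is_word_letter b) wk.
have nbk : nonempty (concat (letter b) k) by apply/nonempty_concat; left; apply: nonempty_letter.
have [[e q] [Ep Ebk]] := split_at_pos wuJ wp wbk Eu nbk.
rewrite pre_wpow // in Ep; rewrite sfx_wpow // sfx_letter // concat_assoc in Ebk.
have [bq _] := letter_concat_inj wk
  (is_word_concat (is_word_sfxs q wu) (is_word_wpow wu (is_word_sfxs e wJ))) Ebk.
apply: (str_lt_irr wv); apply: (str_lt_lex_trans _ _ (succ_le e)).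
  by apply: is_word_concat => //; apply: is_word_wpow => //; apply: is_word_concat.
apply: (str_ltI (t := concat (sfxs u q) v) wp wr _ ab Ev).
  by apply: is_word_concat => //; apply: is_word_sfxs.
rewrite wpow_concat wpow_letter {2}(concat_pre_sfx q wu) (sfx_letter q wu) Ep bq.
by rewrite !concat_assoc.
Qed.

Lemma upow_v_le_v_succ (J : cordinal) : is_word J ->
  lex_le (concat (wpow u J) v) v -> lex_le (concat (wpow u (concat J (letter tt))) v) v.
Proof.
move=> wJ le_Jv; have wuJ := is_word_wpow wu wJ.
apply: (lex_le_trans _ (is_word_concat wuJ wv) _ le_Jv); first by auto.
by rewrite wpow_concat wpow_letter concat_assoc; apply: lex_le_concat2l => //; apply: uv_le_v.
Qed.

Lemma upow_v_le_v_limit (J : cordinal) : is_word J ->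
  (forall e : pos J, lex_le (concat (wpow u (concat (pre J e) (letter tt))) v) v) ->
  lex_le (concat (wpow u J) v) v.
Proof.
move=> wJ succ_le; have wW := is_word_concat (is_word_wpow wu wJ) wv.
case: (lex_trichotomy wW wv) => [? | /(upow_v_prefix wJ) E | ? | /(v_not_str_lt_upow_v wJ) []].
- by left.
- exact: lex_le_of_weq.
- by right.
- exact: succ_le.
Qed.

Lemma upow_v_le_v (J : cordinal) : is_word J -> lex_le (concat (wpow u J) v) v.
Proof.
move: J; apply: (word_prefix_ind (Q := fun J => lex_le (concat (wpow u J) v) v)).
  by move=> I J' E; rewrite E.
move=> J wJ IH.
apply: (upow_v_le_v_limit wJ) => e.
exact: (upow_v_le_v_succ (is_word_pre e wJ) (IH e)).
Qed.

Section Prime.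
Variable alpha : cordinal.
Hypothesis walpha : is_word alpha.

Let w := concat (wpow u alpha) v.
Let ww : is_word w := is_word_concat (is_word_wpow wu walpha) wv.

Lemma w_le_sfx (c : pos w) : lex_le w (sfx w c).
Proof.
have wua := is_word_wpow wu walpha.
case: c => [[e q] | q]; last first.
  rewrite sfx_concat_r //; apply: (lex_le_trans ww wv); first exact: upow_v_le_v.
  exact: prime_le_sfx.
rewrite sfx_concat_l // sfx_wpow //.
case: (prime_sfx_cases q wu pu) => [Eq | lt_uq].
  have [rho [wrho Ealpha]] := cordinal_sub_prefix (fun a => ~ plt a e) walpha.
  rewrite Eq -{1}(wpow_letter u (lbl e)) -wpow_concat -(sfx_letter e walpha).
  rewrite /w [in wpow u alpha]Ealpha wpow_concat concat_assoc.
  apply: lex_le_concat2l; first exact: is_word_wpow.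
  exact: upow_v_le_v.
have [e0 _ mine0] := plt_min walpha (ex_intro (fun=> True) e I).
rewrite /w {1}(first_letter_split walpha (fun a ae0 => mine0 a I ae0)) wpow_concat wpow_letter.
by right; rewrite !concat_assoc; apply: str_lt_concat => //; apply: is_word_concat.
Qed.

Lemma w_le_suffix x z : is_word x -> is_word z -> weq w (concat x z) -> nonempty z -> lex_le w z.
Proof.
move=> wx wz E nz; have [c [_ ->]] := split_at_pos ww wx wz E nz.
exact: w_le_sfx.
Qed.

Lemma w_pow_border y (beta : cordinal) (P : pos beta -> Prop) x :
  is_word y -> is_word beta -> is_word x -> weq w (wpow y beta) ->
  weq w (concat x (wpow y (sub beta P))) -> nonempty (wpow y (sub beta P)) ->
  weq (wpow y (sub beta P)) w.
Proof.
move=> wy wbeta wx Ew E nZ; have wZ := is_word_wpow wy (is_word_sub P wbeta).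
apply: lex_le_antisym => //; last exact: (w_le_suffix wx wZ E nZ).
have [rho [wrho Ebeta]] := cordinal_sub_prefix P wbeta.
left; exists (wpow y rho); split; first exact: is_word_wpow.
by rewrite Ew {1}Ebeta wpow_concat.
Qed.

Lemma w_primitive : primitive w.
Proof.
move=> y beta wy wbeta Ew; have wua := is_word_wpow wu walpha.
have [[b q] [_ Ev]] :=
  split_at_pos (is_word_wpow wy wbeta) wua wv (weq_sym Ew) (prime_nonempty wv pv).
rewrite sfx_wpow // in Ev.
(* [v] starts at position [q] of block [b] of [y^beta]. *)
have ny : nonempty y by exists; exact: q.
have Esplit : weq w (concat (wpow y (pre beta b)) (concat y (wpow y (sfxs beta b)))).
  rewrite Ew {1}(concat_pre_sfx b wbeta) wpow_concat.
  by rewrite (sfx_letter b wbeta) wpow_concat wpow_letter.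
case: (classic (nonempty (sfxs beta b))) => [nS | nS].
  have nZ : nonempty (wpow y (sfxs beta b)) by apply/nonempty_wpow.
  rewrite -concat_assoc in Esplit.
  have wpre := is_word_concat (is_word_wpow wy (is_word_pre b wbeta)) wy.
  have EZ := w_pow_border wy wbeta wpre Ew Esplit nZ.
  have Evw : weq v w.
    apply: lex_le_antisym => //; last exact: (upow_v_le_v walpha).
    by rewrite -EZ; apply: (prime_suffix_ge pv (is_word_sfx q wy) _ Ev nZ).
  have [-> Eyv] := proj1 pv y beta wy wbeta (weq_trans Evw Ew).
  by split=> //; rewrite Eyv.
have Eyb : weq (wpow y (sfx beta b)) y.
  by rewrite (sfx_letter b wbeta) wpow_concat wpow_letter concat_empty_r //; case/nonempty_wpow.
have nZ : nonempty (wpow y (sfx beta b)) by rewrite Eyb.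
have Eyw : weq y w.
  rewrite -Eyb; apply: (w_pow_border wy wbeta (is_word_wpow wy (is_word_pre b wbeta)) Ew _ nZ).
  by rewrite Ew {1}(concat_pre_sfx b wbeta) wpow_concat.
by split=> //; apply: (wpow_self_one wy wbeta ny (weq_trans Eyw Ew)).
Qed.

Lemma prime_wpow_concat : prime_word w.
Proof.
split; first exact: w_primitive.
by move=> z wz [x [wx [_ [nz E]]]]; apply: (w_le_suffix wx wz E nz).
Qed.

End Prime.

End PowerThenPrime.

Theorem mainTheorem4 (d : Order.disp_t) (A : finOrderType d) (u v : rword A) :
  is_word u -> is_word v -> prime_word u -> prime_word v -> lex_lt u v ->
  forall alpha : cordinal, is_word alpha ->
    prime_word (concat (wpow u alpha) v).
Proof.
move=> wu wv pu pv uv alpha walpha.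
exact: (prime_wpow_concat wu wv pu pv uv walpha).
Qed.
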